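(* Let $q=p^e>2$ with $p$ prime, let $r\ge2$, $m=2r$, $D=\{x\in\mathbb{F}_{q^m}:\mathrm{Tr}_{q^r/q}(x^{q^r+1})=0\}=\{d_1,\dots,d_n\}$, and $\overline{\mathcal{C}_D}=\{(\mathrm{Tr}_{q^m/q}(bx)+c)_{x\in D}:b\in\mathbb{F}_{q^m},c\in\mathbb{F}_q\}$. Let $\alpha$ generate $\mathbb{F}_{q^m}^*$ and let $G_1$ be the generator matrix of $\overline{\mathcal{C}_D}$ whose first row is $(1,\dots,1)$, second row $(\mathrm{Tr}_{q^m/q}(d_j))_j$, third row $(\mathrm{Tr}_{q^m/q}(\alpha d_j)+1)_j$, and $(i+2)$-th row $(\mathrm{Tr}_{q^m/q}(\alpha^i d_j))_j$ for $2\le i\le m-1$. Let $\overline{\mathcal{C}_D}'$ be the code generated by $[I_{m+1}:G_1]$. Then $\overline{\mathcal{C}_D}$ is a self-orthogonal code which is almost optimally or optimally extendable, i.e. $0\le d(\overline{\mathcal{C}_D}^{\perp})-d(\overline{\mathcal{C}_D}'^{\perp})\le 1$.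
   Context: $d(\cdot)$ denotes minimum distance. For a linear code $\mathcal{C}$ with $k\times n$ generator matrix $G$, let $\mathcal{C}'$ be the code generated by $[I_k:G]$; $\mathcal{C}$ is optimally extendable if $d(\mathcal{C}'^{\perp})=d(\mathcal{C}^{\perp})$ and almost optimally extendable if $d(\mathcal{C}'^{\perp})=d(\mathcal{C}^{\perp})-1$. Self-orthogonal means $\mathcal{C}\subseteq\mathcal{C}^\perp$. *)

From HB Require Import structures.
From mathcomp Require Import all_boot all_order all_algebra.
Set Implicit Arguments. Unset Strict Implicit. Unset Printing Implicit Defensive.
Import GRing.Theory.
Local Open Scope ring_scope.

Definition trq (L : finFieldType) (q k : nat) (x : L) : L :=
  \sum_(i < k) x ^+ (q ^ i)%N.

Definition Dset (L : finFieldType) (q r : nat) : {set L} :=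
  [set x : L | trq q r (x ^+ (q ^ r + 1)%N) == 0].

Definition dpt (L : finFieldType) (q r : nat) (j : 'I_#|Dset L q r|) : L :=
  enum_val j.

Definition rowspace (F : fieldType) (k N : nat) (A : 'M[F]_(k, N))
  : pred 'rV[F]_N := fun v => (v <= A)%MS.

Definition dual (F : finFieldType) (N : nat) (C : {set 'rV[F]_N})
  : {set 'rV[F]_N} :=
  [set u | [forall v in C, u *m v^T == 0]].

Definition wt (F : fieldType) (N : nat) (v : 'rV[F]_N) : nat :=
  #|[set j : 'I_N | v 0 j != 0]|.

(* minimum distance: least weight of a nonzero codeword (N if none) *)
Definition dmin (F : finFieldType) (N : nat) (C : {set 'rV[F]_N}) : nat :=
  \big[minn/N]_(v in C | v != 0) wt v.

Definition self_orthogonal (F : finFieldType) (N : nat) (C : {set 'rV[F]_N}) :=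
  C \subset dual C.

Definition ext_code (F : finFieldType) (k N : nat) (G : 'M[F]_(k, N))
  : {set 'rV[F]_(k + N)} :=
  [set v | rowspace (row_mx 1%:M G) v].

Definition optimally_extendable (F : finFieldType) (k N : nat)
  (C : {set 'rV[F]_N}) (G : 'M[F]_(k, N)) :=
  dmin (dual (ext_code G)) = dmin (dual C).

Definition almost_optimally_extendable (F : finFieldType) (k N : nat)
  (C : {set 'rV[F]_N}) (G : 'M[F]_(k, N)) :=
  (dmin (dual (ext_code G)) + 1)%N = dmin (dual C).

(* the augmented trace code  { (Tr_{q^m/q}(b x) + c)_{x in D} : b in F_{q^m}, c in F_q },
   with F_q embedded in F_{q^m} by iota *)
Definition CDbar (F L : finFieldType) (iota : F -> L) (q r : nat)
  : {set 'rV[F]_#|Dset L q r|} :=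
  [set v : 'rV[F]_#|Dset L q r| | [exists b : L, exists c : F,
     [forall j, iota (v 0 j) == trq q (2 * r) (b * dpt j) + iota c]]].

Definition G1entry (L : finFieldType) (q r : nat) (alpha : L)
  (i : 'I_(2 * r).+1) (j : 'I_#|Dset L q r|) : L :=
  if i == 0 :> nat then 1
  else if i == 1 :> nat then trq q (2 * r) (dpt j)
  else if i == 2 :> nat then trq q (2 * r) (alpha * dpt j) + 1
  else trq q (2 * r) (alpha ^+ (i.-1) * dpt j).
Arguments G1entry {L} q r alpha i j.

(* Let Q(x) = Tr_{q^r/q}(x^(q^r+1)), so that D is the zero set of Q.  Q(hx) = h^(q^r+1) Q(x)
   and h^(q^r+1) lies in F_q^* for every h in the cyclic subgroup of order (q-1)(q^r+1)
   of F_{q^m}^*, so D is stable under that subgroup and the power sum of x^n over D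
   vanishes unless (q-1)(q^r+1) divides n.  Expanding the traces, the inner product of two
   codewords of the augmented trace code is a combination of such power sums with
   n = q^k or q^k + q^l (k, l < 2r), none of which is divisible by (q-1)(q^r+1) when
   q > 2, plus a multiple of |D|, which vanishes mod p by Chevalley-Warning.

   For the extension: the all-one row of G_1 forces every nonzero dual codeword of the
   code generated by [I : G_1] to have weight at least 2; padding dual codewords of
   C_D with zeros gives d(C_D'^perp) <= d(C_D^perp); and for x in D \ {0} and
   a in F_q \ {0, 1} the word (a-1) e_0 - a e_x + e_{ax} is a dual codeword of weight
   at most 3.  Hence 2 <= d(C_D'^perp) <= d(C_D^perp) <= 3. *)

From HB Require Import structures.
From mathcomp Require Import all_boot all_order all_algebra.
From mathcomp Require Import fingroup cyclic finfield.
From mathcomp Require Import zify ring.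
Set Implicit Arguments. Unset Strict Implicit. Unset Printing Implicit Defensive.
Import GRing.Theory.

Section ExponentDivisibility.

Variables q r : nat.
Hypotheses (q_gt2 : 2 < q) (r_gt0 : 0 < r).

Lemma coprime_expn_add1 : coprime (q ^ r + 1) q.
Proof.
rewrite -coprime_modl -(prednK r_gt0) expnS mulnC modnMDl modn_small ?coprime1n //.
lia.
Qed.

Lemma dvdn_expn_add1 j : j < 2 * r -> q ^ r + 1 %| q ^ j + 1 -> j = r.
Proof.
move=> j_lt dv; have [j_lt_r|r_lt_j|//] := ltngtP j r.
  have := dvdn_leq _ dv; rewrite addn_gt0 orbT => /(_ isT).
  have : q ^ j < q ^ r by rewrite ltn_exp2l; lia.
  lia.
have [t t_gt0 def_j] : exists2 t, 0 < t & j = r + t by exists (j - r); lia.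
subst j.
have t_lt_r : t < r by lia.
have qt_gt1 : 1 < q ^ t by rewrite -(expn0 q) ltn_exp2l; lia.
have qt_lt : q ^ t < q ^ r by rewrite ltn_exp2l; lia.
have : q ^ r + 1 %| q ^ t * (q ^ r + 1) - (q ^ (r + t) + 1).
  by rewrite dvdn_sub ?dvdn_mull.
rewrite expnD; have -> : q ^ t * (q ^ r + 1) - (q ^ r * q ^ t + 1) = q ^ t - 1 by nia.
by move/dvdn_leq; lia.
Qed.

Lemma not_dvdn_exp k : ~~ (q.-1 * (q ^ r + 1) %| q ^ k).
Proof.
apply/negP => /(dvdn_trans (dvdn_mull _ (dvdnn _))).
rewrite -(muln1 (q ^ k)) Gauss_dvdr ?coprimeXr ?coprime_expn_add1 // dvdn1 addn1 eqSS.
by rewrite expn_eq0; lia.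
Qed.

Lemma not_dvdn_expD k l : k < 2 * r -> l < 2 * r ->
  ~~ (q.-1 * (q ^ r + 1) %| q ^ k + q ^ l).
Proof.
wlog le_lk : k l / l <= k.
  move=> wlog_kl k_lt l_lt; have [le_lk|/ltnW le_kl] := leqP l k.
    exact: wlog_kl le_lk k_lt l_lt.
  by rewrite [q ^ k + _]addnC; apply: wlog_kl le_kl l_lt k_lt.
move=> k_lt _; rewrite -(subnK le_lk) expnD -{2}(mul1n (q ^ l)) -mulnDl [_ * q ^ l]mulnC.
have q_coprime : coprime (q.-1 * (q ^ r + 1)) q.
  by rewrite coprimeMl coprime_expn_add1 coprimePn ?andbT //; lia.
rewrite Gauss_dvdr ?coprimeXr //; apply/negP => dv.
have /dvdn_expn_add1 j_eq : q ^ r + 1 %| q ^ (k - l) + 1.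
  exact: dvdn_trans (dvdn_mull _ (dvdnn _)) dv.
move: dv; rewrite j_eq; last by lia.
rewrite -{2}(mul1n (q ^ r + 1)) dvdn_pmul2r ?addn1 // dvdn1; lia.
Qed.

End ExponentDivisibility.

Local Open Scope ring_scope.

Lemma sum_expr_stable (L : finFieldType) (A : {set L}) (h : L) n :
    h != 0 -> h ^+ n != 1 -> (forall x, (h * x \in A) = (x \in A)) ->
  \sum_(x in A) x ^+ n = 0.
Proof.
move=> h_neq0 hn_neq1 hA; set S := \sum_(x in A) _.
have S_hS : S = h ^+ n * S.
  rewrite {1}/S (reindex_inj (mulfI h_neq0)) /= mulr_sumr.
  by apply: eq_big => [x|x _]; rewrite ?hA ?exprMn.
apply/eqP; move: S_hS => /eqP; rewrite -subr_eq0 -{1}[S]mul1r -mulrBl mulf_eq0.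
by rewrite subr_eq0 eq_sym (negbTE hn_neq1).
Qed.

Section FiniteFieldSums.

Variables (L : finFieldType) (a : L).
Hypotheses (a_neq0 : a != 0) (a_gen : forall x : L, x != 0 -> exists k, x = a ^+ k).

Lemma expr_generator_eq1 n : (a ^+ n == 1) = (#|L|.-1 %| n)%N.
Proof.
pose u := finField_unit a_neq0.
have gen_u : <[u]>%g = [set: {unit L}].
  apply/eqP; rewrite eqEsubset subsetT /=; apply/subsetP => w _.
  have [k w_k] : exists k, val w = a ^+ k by apply: a_gen; rewrite -unitfE (valP w).
  have -> : w = (u ^+ k)%g by apply: val_inj; rewrite FinRing.val_unitX.
  exact: mem_cycle.
by rewrite -card_finField_unit -gen_u order_dvdn -val_eqE FinRing.val_unitX.
Qed.

Lemma natr_card_finField : (#|L|)%:R = 0 :> L.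
Proof. by rewrite -cardsT -FinRing.zmodXgE expg_cardG ?inE. Qed.

Lemma sum_expr_finField n : (n < #|L|.-1)%N -> \sum_(x : L) x ^+ n = 0.
Proof.
case: n => [_|n n_lt]; first by rewrite sumr_const natr_card_finField.
rewrite (eq_bigl (fun x => x \in [set: L])) => [|x]; last by rewrite in_setT.
apply: (@sum_expr_stable L [set: L] a n.+1 a_neq0) => [|x]; last by rewrite !in_setT.
by rewrite expr_generator_eq1; apply/negP => /(dvdn_leq (ltn0Sn n)); lia.
Qed.

Lemma sum_horner_finField (P : {poly L}) : (size P < #|L|)%N ->
  \sum_(x : L) P.[x] = 0.
Proof.
move=> P_small; have P_size : (size P <= #|L|.-1)%N by lia.
under eq_bigr => x _ do rewrite (horner_coef_wide x P_size).
rewrite exchange_big big1 //= => i _.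
by rewrite -mulr_sumr sum_expr_finField ?mulr0.
Qed.

End FiniteFieldSums.

Section Trace.

Variables (L : finFieldType) (q : nat).

Lemma expr_fixed_pow (c : L) i : c ^+ q = c -> c ^+ (q ^ i) = c.
Proof. by move=> cq; elim: i => [|i IH]; rewrite ?expr1 // expnSr exprM IH. Qed.

Lemma fixed_expr_pred (c : L) : (0 < q)%N -> c ^+ q = c -> c != 0 -> c ^+ q.-1 = 1.
Proof.
move=> q_gt0 cq c_neq0; apply: (mulfI c_neq0).
by rewrite -exprS prednK // cq mulr1.
Qed.

Lemma trq0 k : (0 < q)%N -> trq q k (0 : L) = 0.
Proof.
by move=> q_gt0; rewrite /trq big1 // => i _; rewrite expr0n expn_eq0 eqn0Ngt q_gt0.
Qed.

Lemma trq_scale k (c y : L) : c ^+ q = c -> trq q k (c * y) = c * trq q k y.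
Proof.
move=> cq; rewrite /trq mulr_sumr; apply: eq_bigr => i _.
by rewrite exprMn (expr_fixed_pow _ cq).
Qed.

Lemma trq_fixed k (y : L) : [pchar L].-nat q -> y ^+ (q ^ k) = y ->
  trq q k y ^+ q = trq q k y.
Proof.
move=> q_pchar yk; have q_gt0 : (0 < q)%N := (andP q_pchar).1.
pose g i := y ^+ (q ^ i); rewrite /trq.
rewrite (big_morph (fun x : L => x ^+ q) (fun x z => exprDn_pchar x z q_pchar)
  (_ : 0 ^+ q = 0)); last by rewrite expr0n eqn0Ngt q_gt0.
under eq_bigr => i _ do rewrite -exprM -expnSr -/(g i.+1).
(* cyclic shift of the indices, using g k = y = g 0 *)
apply: (addIr (g 0%N)); rewrite addrC -(big_ord_recl k g) big_ord_recr /=.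
by rewrite /g yk expn0 expr1.
Qed.

End Trace.

Section Weight.

Variable F : fieldType.

Lemma wt_leq N (v : 'rV[F]_N) : (wt v <= N)%N.
Proof. by rewrite /wt -[X in (_ <= X)%N]card_ord max_card. Qed.

Lemma wt_eq0 N (v : 'rV[F]_N) : (wt v == 0%N) = (v == 0).
Proof.
rewrite /wt cards_eq0; apply/eqP/eqP => [supp0|->].
  apply/matrixP => i j; rewrite ord1 mxE; apply/eqP/negPn/negP => vj.
  by have := in_set0 j; rewrite -supp0 inE vj.
by apply/setP => j; rewrite !inE mxE eqxx.
Qed.

Lemma wt0 N : wt (0 : 'rV[F]_N) = 0%N.
Proof. by apply/eqP; rewrite wt_eq0. Qed.

Lemma wt_eq1 N (v : 'rV[F]_N) : wt v = 1%N -> exists j, v = v 0 j *: delta_mx 0 j.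
Proof.
move/eqP/cards1P => [j supp_j]; exists j; apply/matrixP => i k.
rewrite ord1 !mxE eqxx; case: eqP => [->|/eqP k_neq_j]; first by rewrite mulr1.
rewrite mulr0; apply/eqP; apply: contraNT k_neq_j => vk.
by rewrite -in_set1 -supp_j inE.
Qed.

Lemma wt_row_mx k N (u : 'rV[F]_k) (v : 'rV[F]_N) :
  wt (row_mx u v) = (wt u + wt v)%N.
Proof.
rewrite /wt -!sum1dep_card big_split_ord /=.
by congr (_ + _)%N; apply: eq_bigl => j; rewrite ?row_mxEl ?row_mxEr.
Qed.

Lemma wt_le_card N (v : 'rV[F]_N) (S : {set 'I_N}) :
  (forall j, v 0 j != 0 -> j \in S) -> (wt v <= #|S|)%N.
Proof. by move=> supp_S; apply/subset_leq_card/subsetP => j; rewrite inE => /supp_S. Qed.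

End Weight.

Section Codes.

Variable F : finFieldType.

Lemma dmin_le_wt N (C : {set 'rV[F]_N}) v : v \in C -> v != 0 -> (dmin C <= wt v)%N.
Proof.
move=> vC v_neq0; rewrite /dmin -big_filter.
have : v \in [seq w <- index_enum _ | (w \in C) && (w != 0)].
  by rewrite mem_filter vC v_neq0 mem_index_enum.
elim: (filter _ _) => [//|w s IH]; rewrite inE big_cons => /predU1P[<-|/IH].
  exact: geq_minl.
exact: leq_trans (geq_minr _ _).
Qed.

Lemma leq_dmin N (C : {set 'rV[F]_N}) m :
  (forall v, v \in C -> v != 0 -> (m <= wt v)%N) -> (m <= N)%N -> (m <= dmin C)%N.
Proof.
move=> wt_ge m_le; rewrite /dmin; elim/big_ind: _ => // [x y|v /andP[]].
  by rewrite leq_min => -> ->.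
exact: wt_ge.
Qed.

Lemma dual_mulmx_tr m N (C : {set 'rV[F]_N}) (A : 'M[F]_(m, N)) u :
  (forall i, row i A \in C) -> u \in dual C -> u *m A^T = 0.
Proof.
move=> A_C; rewrite inE => /forallP u_dual; apply/matrixP => i j.
have /implyP/(_ (A_C j))/eqP/matrixP/(_ i 0) := u_dual (row j A).
by rewrite !mxE => u_row; rewrite -[RHS]u_row; apply: eq_bigr => k _; rewrite !mxE.
Qed.

Lemma mem_dual_ext_code k N (G : 'M[F]_(k, N)) u1 u2 :
  (row_mx u1 u2 \in dual (ext_code G)) = (u1 == - (u2 *m G^T)).
Proof.
rewrite -addr_eq0; apply/idP/eqP => [u_dual|u_orth].
  have rows_ext i : row i (row_mx 1%:M G) \in ext_code G by rewrite inE /rowspace row_sub.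
  by have := dual_mulmx_tr rows_ext u_dual; rewrite tr_row_mx mul_row_col trmx1 mulmx1.
rewrite inE; apply/forallP => v; apply/implyP; rewrite inE /rowspace => /submxP[z ->].
by rewrite trmx_mul mulmxA tr_row_mx mul_row_col trmx1 mulmx1 u_orth mul0mx.
Qed.

Lemma wt_dual_ext_code k N (G : 'M[F]_(k, N)) u :
  (forall j, col j G != 0) -> u \in dual (ext_code G) -> u != 0 -> (2 <= wt u)%N.
Proof.
move=> G_cols; rewrite -(hsubmxK u) mem_dual_ext_code wt_row_mx.
move: (lsubmx u) (rsubmx u) => _ u2 /eqP-> u_neq0.
have [u2_0|] := eqVneq u2 0.
  by move: u_neq0; rewrite u2_0 mul0mx oppr0 row_mx0 eqxx.
rewrite -wt_eq0 -lt0n leq_eqVlt => /orP[/eqP wt1|wt_gt1].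
  2: exact: leq_trans wt_gt1 (leq_addl _ _).
have [j u2E] := wt_eq1 (esym wt1).
have u2j_neq0 : u2 0 j != 0.
  by apply/eqP => u2j; move: wt1; rewrite u2E u2j scale0r wt0.
rewrite -wt1 addn1 ltnS lt0n wt_eq0 u2E -scalemxAl -rowE -tr_col oppr_eq0.
by rewrite scaler_eq0 trmx_eq0 negb_or u2j_neq0 G_cols.
Qed.

Lemma dmin_dual_ext_code_le k N (C : {set 'rV[F]_N}) (G : 'M[F]_(k, N)) :
    (forall i, row i G \in C) -> (exists2 v, v \in dual C & v != 0) ->
  (dmin (dual (ext_code G)) <= dmin (dual C))%N.
Proof.
move=> G_C [v0 v0_dual v0_neq0].
have lift_le v : v \in dual C -> v != 0 -> (dmin (dual (ext_code G)) <= wt v)%N.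
  move=> v_dual v_neq0; rewrite -[wt v]add0n -(wt0 F k) -wt_row_mx.
  apply: dmin_le_wt; last by rewrite row_mx_eq0 negb_and v_neq0 orbT.
  by rewrite mem_dual_ext_code (dual_mulmx_tr G_C v_dual) oppr0.
apply: leq_dmin => [v|]; first exact: lift_le.
exact: leq_trans (lift_le v0 v0_dual v0_neq0) (wt_leq v0).
Qed.

End Codes.

Section TraceQuadric.

Variables (L : finFieldType) (q r : nat) (alpha : L).
Hypotheses (q_pchar : [pchar L].-nat q) (q_gt2 : (2 < q)%N) (r_gt1 : (1 < r)%N).
Hypothesis card_L : #|L| = (q ^ (2 * r))%N.
Hypotheses (alpha_neq0 : alpha != 0)
  (alpha_gen : forall x : L, x != 0 -> exists k, x = alpha ^+ k).

Local Notation D := (Dset L q r).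
Local Notation Q x := (@trq L q r (x ^+ (q ^ r + 1))).

Let q_gt0 : (0 < q)%N := ltnW (ltnW q_gt2).
Let r_gt0 : (0 < r)%N := ltnW r_gt1.

Lemma Q_fixed x : Q x ^+ q = Q x.
Proof.
apply: trq_fixed => //; rewrite -exprM mulnDl mul1n exprD -expnD addnn -mul2n.
by rewrite -card_L expf_card addn1 exprS.
Qed.

Lemma mem_Dset_scale h x : h != 0 -> h ^+ (q ^ r + 1) ^+ q = h ^+ (q ^ r + 1) ->
  (h * x \in D) = (x \in D).
Proof.
move=> h_neq0 hq; rewrite !inE exprMn trq_scale //.
by rewrite mulf_eq0 expf_eq0 (negbTE h_neq0) andbF.
Qed.

(* an element of order (q-1)(q^r+1), which acts on D by multiplication *)
Let g := alpha ^+ (\sum_(i < r) q ^ i).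

Let card_L_pred : #|L|.-1 = ((\sum_(i < r) q ^ i) * (q.-1 * (q ^ r + 1)))%N.
Proof.
rewrite card_L mulnCA mulnA -predn_exp mul2n -addnn expnD.
have : (0 < q ^ r)%N by rewrite expn_gt0 q_gt0.
move: (q ^ r)%N => X; nia.
Qed.

Let g_expr_eq1 n : (g ^+ n == 1) = (q.-1 * (q ^ r + 1) %| n)%N.
Proof.
rewrite -exprM expr_generator_eq1 // card_L_pred dvdn_pmul2l //.
by rewrite -(prednK r_gt0) big_ord_recl expn0.
Qed.

Lemma sum_Dset_expr n : ~~ (q.-1 * (q ^ r + 1) %| n)%N -> \sum_(x in D) x ^+ n = 0.
Proof.
move=> n_ndvd; have g_neq0 : g != 0 by rewrite expf_neq0.
apply: (@sum_expr_stable L D g n g_neq0); first by rewrite g_expr_eq1.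
move=> x; apply: mem_Dset_scale => //.
have /eqP g_q1 : g ^+ (q ^ r + 1) ^+ q.-1 == 1 by rewrite -exprM g_expr_eq1 mulnC.
by rewrite -{2}(prednK q_gt0) exprS g_q1 mulr1.
Qed.

Lemma card_Dset : (#|D|)%:R = 0 :> L.
Proof.
pose P : {poly L} := \sum_(i < r) 'X^((q ^ r + 1) * q ^ i).
have P_eval x : P.[x] = Q x.
  by rewrite horner_sum; apply: eq_bigr => i _; rewrite hornerXn exprM.
have P_size : ((size P).-1 <= (q ^ r + 1) * q ^ r.-1)%N.
  rewrite -subn1 leq_subLR; apply: leq_trans (size_sum _ _ _) _.
  apply/bigmax_leqP => i _; rewrite size_polyXn add1n ltnS leq_mul2l.
  by rewrite leq_pexp2l ?orbT // -ltnS prednK.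
(* Chevalley--Warning: 1 - Q^(q-1) is the indicator of D and has degree < |L| - 1 *)
have PQ_size : (size (P ^+ q.-1) < #|L|)%N.
  have := size_exp P q.-1; have := leqSpred (size (P ^+ q.-1)).
  have q_le : (q <= q ^ r.-1)%N by rewrite -{1}(expn1 q) leq_pexp2l // -ltnS prednK.
  have qr : (q ^ r = q * q ^ r.-1)%N by rewrite -expnS prednK.
  rewrite card_L mul2n -addnn expnD qr.
  move: P_size; rewrite qr.
  move: (q ^ r.-1)%N (size P).-1 (size (P ^+ q.-1)) q_le => X s t; nia.
have indicator x : (if x \in D then 1 else 0) = 1 - (P ^+ q.-1).[x].
  rewrite horner_exp P_eval inE; have [->|Qx_neq0] := eqP.
    by rewrite expr0n -subn1 subn_eq0 leqNgt (ltn_trans _ q_gt2) ?subr0.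
  by rewrite fixed_expr_pred ?Q_fixed ?subrr //; apply/eqP.
rewrite -sumr_const big_mkcond /=.
under eq_bigr => x _ do rewrite indicator.
rewrite sumrB sumr_const natr_card_finField.
by rewrite (sum_horner_finField alpha_neq0 alpha_gen) ?subr0.
Qed.

Lemma sum_Dset_trq b : \sum_(x in D) trq q (2 * r) (b * x) = 0.
Proof.
rewrite exchange_big big1 //= => k _.
under eq_bigr => x _ do rewrite exprMn.
by rewrite -mulr_sumr sum_Dset_expr ?mulr0 ?not_dvdn_exp.
Qed.

Lemma sum_Dset_trq_mul b b' :
  \sum_(x in D) trq q (2 * r) (b * x) * trq q (2 * r) (b' * x) = 0.
Proof.
under eq_bigr => x _ do rewrite mulr_suml; rewrite exchange_big big1 //= => k _.
under eq_bigr => x _ do rewrite mulr_sumr; rewrite exchange_big big1 //= => l _.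
under eq_bigr => x _ do rewrite !exprMn mulrACA -exprD.
by rewrite -mulr_sumr sum_Dset_expr ?mulr0 ?not_dvdn_expD.
Qed.

Lemma Dset_nontrivial : exists2 x, x \in D & x != 0.
Proof.
have [x /andP[xD x_neq0]|no_x] := pickP [pred x | (x \in D) && (x != 0)].
  by exists x.
have D1 : D = [set 0].
  apply/setP => x; rewrite in_set1; have [->|x_neq0] := eqVneq x 0.
    by rewrite inE addn1 exprS mul0r trq0 ?eqxx.
  by move: (no_x x); rewrite /= x_neq0 andbT.
by have := card_Dset; rewrite D1 cards1 => /eqP; rewrite oner_eq0.
Qed.

Variables (F : finFieldType) (iota : {rmorphism F -> L}).
Hypothesis card_F : #|F| = q.

Local Notation C := (CDbar iota q r).
Local Notation Tr x := (trq q (2 * r) x).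

Lemma CDbarP (v : 'rV[F]_#|D|) :
  reflect (exists b c, forall j, iota (v 0 j) = Tr (b * dpt j) + iota c) (v \in C).
Proof.
rewrite inE; apply: (iffP existsP) => [[b /existsP[c /forallP v_bc]]|[b [c v_bc]]].
  by exists b, c => j; apply/eqP.
by exists b; apply/existsP; exists c; apply/forallP => j; rewrite v_bc.
Qed.

Lemma iota_fixed a : iota a ^+ q = iota a.
Proof. by rewrite -rmorphXn -card_F expf_card. Qed.

Lemma CDbar_self_orthogonal : self_orthogonal C.
Proof.
apply/subsetP => v /CDbarP[b [c v_bc]]; rewrite inE; apply/forallP => w.
apply/implyP => /CDbarP[b' [c' w_bc]]; apply/eqP/matrixP => i k.
rewrite !ord1 !mxE; apply: (fmorph_inj iota); rewrite rmorph0 rmorph_sum /=.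
under eq_bigr => j _ do rewrite mxE rmorphM v_bc w_bc.
rewrite /dpt.
rewrite -(big_enum_val (fun x => (Tr (b * x) + iota c) * (Tr (b' * x) + iota c'))) /=.
under eq_bigr => x _ do rewrite mulrDl !mulrDr.
rewrite !big_split /= sum_Dset_trq_mul -mulr_suml -!mulr_sumr !sum_Dset_trq.
by rewrite sumr_const -mulr_natr card_Dset !(mulr0, mul0r, add0r).
Qed.

Lemma dual_CDbar_weight_le3 : exists v, [/\ v \in dual C, v != 0 & (wt v <= 3)%N].
Proof.
have [x xD x_neq0] := Dset_nontrivial.
have /card_gt0P[a] : (0 < #|~: [set 0%R; 1%R : F]|)%N.
  have := cardsC [set 0; 1 : F]; rewrite cards2 eq_sym oner_neq0.
  by rewrite -[X in _ = X -> _]/#|F| card_F /=; lia.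
rewrite !inE negb_or => /andP[a_neq0 a_neq1]; set lam := iota a.
have lam_neq0 : lam != 0 by rewrite fmorph_eq0.
have lamxD : lam * x \in D.
  by rewrite mem_Dset_scale // -!exprM mulnC exprM iota_fixed.
have D0 : 0 \in D by rewrite inE addn1 exprS mul0r trq0.
pose idx y := enum_rank_in D0 y.
have idxK y : y \in D -> dpt (idx y) = y by move=> yD; rewrite /dpt enum_rankK_in.
set j0 := idx 0; set j1 := idx x; set j2 := idx (lam * x).
have j20 : j2 != j0.
  apply: contraNneq (mulf_neq0 lam_neq0 x_neq0) => j20.
  by rewrite -(idxK _ lamxD) -/j2 j20 idxK.
have j21 : j2 != j1.
  have lam_neq1 : lam != 1 by rewrite fmorph_eq1.
  apply/eqP => j21; move/eqP: lam_neq1; apply; apply: (mulIf x_neq0).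
  by rewrite mul1r -(idxK _ lamxD) -/j2 j21 idxK.
pose v := (a - 1) *: delta_mx 0 j0 - a *: delta_mx 0 j1 + delta_mx 0 j2 : 'rV[F]_#|D|.
exists v; split.
- rewrite inE; apply/forallP => w; apply/implyP => /CDbarP[b [c w_bc]].
  rewrite /v mulmxDl mulmxBl -!scalemxAl -!rowE; apply/eqP/matrixP => i k.
  rewrite !ord1 !mxE; apply: (fmorph_inj iota).
  rewrite rmorph0 rmorphD rmorphB !rmorphM rmorphB rmorph1 !w_bc !idxK //.
  rewrite mulr0 trq0 // mulrCA [Tr (lam * _)]trq_scale ?iota_fixed //.
  by rewrite /lam; ring.
- apply/eqP => /matrixP/(_ 0 j2)/eqP; rewrite !mxE !eqxx /=.
  by rewrite (negbTE j20) (negbTE j21) !mulr0 subrr add0r oner_eq0.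
apply: leq_trans (wt_le_card (S := [set j0; j1; j2]) _) _.
  move=> j; apply: contraR; rewrite !inE !mxE.
  move=> /norP[/norP[/negbTE-> /negbTE->] /negbTE->].
  by rewrite !andbF !mulr0 subrr addr0.
by apply: leq_trans (leq_card_setU _ _) _; rewrite cards2 cards1 addn1 !ltnS leq_b1.
Qed.

End TraceQuadric.

Section GeneratorMatrix.

Variables (L F : finFieldType) (iota : {rmorphism F -> L}) (q r : nat) (alpha : L).
Hypothesis q_gt0 : (0 < q)%N.
Variable G1 : 'M[F]_((2 * r).+1, #|Dset L q r|).
Hypothesis G1E : forall i j, iota (G1 i j) = G1entry q r alpha i j.

Lemma row_G1_CDbar i : row i G1 \in CDbar iota q r.
Proof.
have [b [c G1_bc]] : exists b c,
    G1entry q r alpha i =1 (fun j => trq q (2 * r) (b * dpt j) + iota c).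
  rewrite /G1entry; case: eqP => _.
    by exists 0, 1 => j; rewrite mul0r trq0 // add0r rmorph1.
  case: eqP => _; first by exists 1, 0 => j; rewrite mul1r rmorph0 addr0.
  case: eqP => _; first by exists alpha, 1 => j; rewrite rmorph1.
  by exists (alpha ^+ i.-1), 0 => j; rewrite rmorph0 addr0.
by apply/CDbarP; exists b, c => j; rewrite mxE G1E G1_bc.
Qed.

Lemma col_G1_neq0 j : col j G1 != 0.
Proof.
apply/eqP => /matrixP/(_ 0 0)/eqP; rewrite !mxE -(inj_eq (fmorph_inj iota)) G1E.
by rewrite rmorph0 /G1entry /= oner_eq0.
Qed.

End GeneratorMatrix.

Theorem theorem3p14
  (p e : nat) (F L : finFieldType) (iota : {rmorphism F -> L}) (r : nat)
  (alpha : L) (G1 : 'M[F]_((2 * r)%N.+1, #|Dset L (p ^ e)%N r|)) :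
  prime p -> (2 < p ^ e)%N -> #|F| = (p ^ e)%N -> (2 <= r)%N ->
  #|L| = ((p ^ e) ^ (2 * r))%N ->
  alpha != 0 -> (forall x : L, x != 0 -> exists k : nat, x = alpha ^+ k) ->
  (forall i j, iota (G1 i j) = G1entry (p ^ e)%N r alpha i j) ->
  self_orthogonal (CDbar iota (p ^ e)%N r) /\
  (almost_optimally_extendable (CDbar iota (p ^ e)%N r) G1 \/
   optimally_extendable (CDbar iota (p ^ e)%N r) G1).
Proof.
move=> p_prime q_gt2 card_F r_gt1 card_L alpha_neq0 alpha_gen G1E.
have q_pchar : [pchar L].-nat (p ^ e)%N.
  rewrite pnatX (pnatE _ p_prime) (@card_finPcharP _ p (e * (2 * r))) //.
  by rewrite card_L -!expnM.
have q_gt0 : (0 < p ^ e)%N by lia.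
split; first exact: (CDbar_self_orthogonal q_pchar q_gt2 r_gt1 card_L alpha_neq0 alpha_gen).
have [v [v_dual v_neq0 wt_v]] :=
  dual_CDbar_weight_le3 q_pchar q_gt2 r_gt1 card_L alpha_neq0 alpha_gen iota card_F.
have dual_le3 := leq_trans (dmin_le_wt v_dual v_neq0) wt_v.
have ext_ge2 : (2 <= dmin (dual (ext_code G1)))%N.
  apply: leq_dmin => [u|]; last by rewrite addSn ltnS; lia.
  exact: wt_dual_ext_code (col_G1_neq0 G1E).
have ext_le := dmin_dual_ext_code_le (row_G1_CDbar q_gt0 G1E)
  (ex_intro2 _ _ v v_dual v_neq0).
rewrite /almost_optimally_extendable /optimally_extendable; lia.
Qed.
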